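(* Let $(L,\alpha_L)$ be a perfect Hom-Leibniz $n$-algebra with $\alpha_L$ injective such that both $(L,\alpha_L)$ and $(\mathfrak{uce}(L),\alpha_{\mathfrak{uce}(L)})$ satisfy condition (C). Then there is an isomorphism (induced by $u_L$) $$\frac{\alpha_L(L)}{Z(\alpha_L(L))}\cong\frac{\alpha_{\mathfrak{uce}(L)}(\mathfrak{uce}(L))}{Z(\alpha_{\mathfrak{uce}(L)}(\mathfrak{uce}(L)))}.$$
   Context: Fix a field $\mathbb K$ and $n\ge2$. A (multiplicative) Hom-Leibniz $n$-algebra is a $\mathbb K$-vector space $L$ with an $n$-linear bracket and a linear map $\alpha_L$ preserving the bracket, satisfying $[[x_1,\dots,x_n],\alpha_L(y_1),\dots,\alpha_L(y_{n-1})]=\sum_{i=1}^n[\alpha_L(x_1),\dots,[x_i,y_1,\dots,y_{n-1}],\dots,\alpha_L(x_n)]$. Perfect: $L=[L,\dots,L]$. For a subspace $S$ closed under the bracket, $Z(S)$ is the set of $x\in S$ such that every bracket with $x$ in some position and all other entries in $S$ is $0$. Condition (C) for $(K,\alpha_K)$: $[\alpha_K(k),\alpha_K(k),\alpha_K(k_3),\dots,\alpha_K(k_n)]=0$ for all $k,k_3,\dots,k_n\in K$. Define $\delta_2:L^{\otimes(2n-1)}\to L^{\otimes n}$, $\delta_2(x_1\otimes\dots\otimes x_n\otimes y_1\otimes\dots\otimes y_{n-1})=[x_1,\dots,x_n]\otimes\alpha_L(y_1)\otimes\dots\otimes\alpha_L(y_{n-1})-\sum_{i=1}^n\alpha_L(x_1)\otimes\dots\otimes[x_i,y_1,\dots,y_{n-1}]\otimes\dots\otimes\alpha_L(x_n)$.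 $\mathfrak{uce}(L)=L^{\otimes n}/\operatorname{im}\delta_2$, classes written $\{x_1,\dots,x_n\}$, with bracket $[\{x_{1,1},\dots,x_{n,1}\},\dots,\{x_{1,n},\dots,x_{n,n}\}]=\{[x_{1,1},\dots,x_{n,1}],\dots,[x_{1,n},\dots,x_{n,n}]\}$ and $\alpha_{\mathfrak{uce}(L)}\{x_1,\dots,x_n\}=\{\alpha_L(x_1),\dots,\alpha_L(x_n)\}$; $u_L:\mathfrak{uce}(L)\to L$, $u_L\{x_1,\dots,x_n\}=[x_1,\dots,x_n]$, is the universal central extension of the perfect $L$. *)

From HB Require Import structures.
From mathcomp Require Import all_boot all_order all_algebra.
Set Implicit Arguments. Unset Strict Implicit. Unset Printing Implicit Defensive.
Import Order.TTheory GRing.Theory.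
Local Open Scope ring_scope.

Section HomLeibniz.
Variables (K : fieldType) (n : nat).

Definition upd (V : Type) (x : {ffun 'I_n -> V}) (i : 'I_n) (y : V)
  : {ffun 'I_n -> V} := [ffun j => if j == i then y else x j].

Definition set_first (V : Type) (x : {ffun 'I_n -> V}) (y : V)
  : {ffun 'I_n -> V} := [ffun j : 'I_n => if val j == 0%N then y else x j].

Definition fmap (V W : Type) (f : V -> W) (x : {ffun 'I_n -> V})
  : {ffun 'I_n -> W} := [ffun j => f (x j)].

Definition is_linear (V W : lmodType K) (f : V -> W) :=
  forall (a : K) (x y : V), f (a *: x + y) = a *: f x + f y.

Definition multilinear (V W : lmodType K) (f : {ffun 'I_n -> V} -> W) :=
  forall (x : {ffun 'I_n -> V}) (i : 'I_n) (a : K) (y z : V),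
    f (upd x i (a *: y + z)) = a *: f (upd x i y) + f (upd x i z).

(* [[x_1..x_n], a(y_1), .., a(y_{n-1})]
     = sum_i [a(x_1), .., [x_i, y_1, .., y_{n-1}], .., a(x_n)]
   (the entries y_1..y_{n-1} are the entries 1..n-1 of y; entry 0 of y is
   irrelevant) *)
Definition hom_leibniz_identity (V : lmodType K)
    (br : {ffun 'I_n -> V} -> V) (alpha : V -> V) :=
  forall x y : {ffun 'I_n -> V},
    br (set_first (fmap alpha y) (br x))
    = \sum_(i < n) br (upd (fmap alpha x) i (br (set_first y (x i)))).

Definition is_HomLeibniz (V : lmodType K)
    (br : {ffun 'I_n -> V} -> V) (alpha : V -> V) :=
  [/\ multilinear br, is_linear alpha,
      (forall x, alpha (br x) = br (fmap alpha x))
    & hom_leibniz_identity br alpha].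

Definition perfect (V : lmodType K) (br : {ffun 'I_n -> V} -> V) :=
  forall z : V, exists s : seq (K * {ffun 'I_n -> V}),
    z = \sum_(p <- s) p.1 *: br p.2.

Definition condC (V : lmodType K) (br : {ffun 'I_n -> V} -> V)
    (alpha : V -> V) :=
  forall (k : V) (x : {ffun 'I_n -> V}),
    br [ffun j : 'I_n => if (val j <= 1)%N then alpha k else alpha (x j)] = 0.

Definition in_image (V : Type) (f : V -> V) (z : V) := exists w, z = f w.

Definition center (V : lmodType K) (S : V -> Prop)
    (br : {ffun 'I_n -> V} -> V) (z : V) :=
  S z /\ forall (i : 'I_n) (y : {ffun 'I_n -> V}),
    (forall j, S (y j)) -> br (upd y i z) = 0.

(* (U, g) is L^{(x)n} / im delta_2, given by its universal property:
   g x = {x_1, ..., x_n}; g is n-linear, kills the image of delta_2 on pure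
   tensors, and every n-linear map killing these factors uniquely through a
   linear map on U. *)
Definition kills_delta2 (V W : lmodType K) (br : {ffun 'I_n -> V} -> V)
    (alpha : V -> V) (f : {ffun 'I_n -> V} -> W) :=
  forall x y : {ffun 'I_n -> V},
    f (set_first (fmap alpha y) (br x))
    = \sum_(i < n) f (upd (fmap alpha x) i (br (set_first y (x i)))).

Definition is_uce_space (L U : lmodType K) (br : {ffun 'I_n -> L} -> L)
    (alpha : L -> L) (g : {ffun 'I_n -> L} -> U) :=
  [/\ multilinear g, kills_delta2 br alpha g
    & forall (W : lmodType K) (f : {ffun 'I_n -> L} -> W),
        multilinear f -> kills_delta2 br alpha f ->
        (exists h : U -> W, is_linear h /\ forall x, h (g x) = f x) /\
        (forall h1 h2 : U -> W, is_linear h1 -> is_linear h2 ->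
           (forall x, h1 (g x) = f x) -> (forall x, h2 (g x) = f x) ->
           forall z, h1 z = h2 z)].

Definition is_uce (L U : lmodType K) (br : {ffun 'I_n -> L} -> L)
    (alpha : L -> L) (g : {ffun 'I_n -> L} -> U)
    (brU : {ffun 'I_n -> U} -> U) (alphaU : U -> U) (u : U -> L) :=
  [/\ @is_uce_space L U br alpha g,
      multilinear brU
      /\ (forall X : {ffun 'I_n -> {ffun 'I_n -> L}},
            brU (fmap g X) = g (fmap br X)),
      is_linear alphaU /\ (forall x, alphaU (g x) = g (fmap alpha x))
    & is_linear u /\ (forall x, u (g x) = br x)].

End HomLeibniz.

From HB Require Import structures.
From mathcomp Require Import all_boot all_order all_algebra.
Import GRing.Theory.
Local Open Scope ring_scope.
Set Implicit Arguments. Unset Strict Implicit.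

(* Perfectness makes u_L surjective, and u_L intertwines the twisting maps,
   so u_L maps alpha_uce(uce L) onto alpha_L(L), and centrality in
   alpha_uce(uce L) is pushed forward by u_L.  Since the bracket of uce L is
   [X] = {u X}, centrality of u x pulls back to x once we know that a pure
   tensor {alpha l_1, ..., alpha l_n} with some l_i annihilating every
   bracket vanishes in uce L.  For i > 1, expand l_1 as a sum of brackets and
   use the relation delta_2 = 0; for i = 1, condition (C) on uce L makes the
   tensor antisymmetric in its first two entries, reducing to i = 2. *)

Section Linearity.
Variable K : fieldType.
Implicit Types V W : lmodType K.

Lemma is_linear0 V W (h : V -> W) : is_linear h -> h 0 = 0.
Proof.
move=> hL; have := hL 1 0 0; rewrite !scale1r addr0 => E.
by apply: (@addrI _ (h 0)); rewrite addr0 -E.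
Qed.

Lemma is_linearD V W (h : V -> W) : is_linear h -> forall x y, h (x + y) = h x + h y.
Proof. by move=> hL x y; have := hL 1 x y; rewrite !scale1r. Qed.

Lemma is_linearZ V W (h : V -> W) : is_linear h -> forall a x, h (a *: x) = a *: h x.
Proof. by move=> hL a x; have := hL a x 0; rewrite !addr0 (is_linear0 hL) addr0. Qed.

Lemma is_linear_sum V W (h : V -> W) (I : Type) (r : seq I) (F : I -> V) :
  is_linear h -> h (\sum_(i <- r) F i) = \sum_(i <- r) h (F i).
Proof. by move=> hL; apply: (big_morph h (is_linearD hL) (is_linear0 hL)). Qed.

Lemma is_linear_comp V1 V2 V3 (f : V1 -> V2) (h : V2 -> V3) :
  is_linear f -> is_linear h -> is_linear (h \o f).
Proof. by move=> fL hL a x y /=; rewrite fL hL. Qed.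

End Linearity.

Section TupleUpdate.
Variable n : nat.
Implicit Types (V W : Type) (i j : 'I_n).

Lemma fmap_upd V W (f : V -> W) (x : {ffun 'I_n -> V}) i y :
  fmap f (upd x i y) = upd (fmap f x) i (f y).
Proof. by apply/ffunP=> j; rewrite !ffunE; case: ifP. Qed.

Lemma upd_id V (x : {ffun 'I_n -> V}) i : upd x i (x i) = x.
Proof. by apply/ffunP=> j; rewrite !ffunE; case: eqP => // ->. Qed.

Lemma upd_eq V (x : {ffun 'I_n -> V}) i a : upd x i a i = a.
Proof. by rewrite ffunE eqxx. Qed.

Lemma upd_neq V (x : {ffun 'I_n -> V}) i j a : j != i -> upd x i a j = x j.
Proof. by rewrite ffunE => /negbTE ->. Qed.

Lemma updC V (x : {ffun 'I_n -> V}) i j a b : i != j ->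
  upd (upd x i a) j b = upd (upd x j b) i a.
Proof.
move=> ij; apply/ffunP=> k; rewrite !ffunE.
case: (eqVneq k j) => [->|kj]; first by rewrite eq_sym (negbTE ij).
by case: (eqVneq k i).
Qed.

Lemma set_first_upd V (x : {ffun 'I_n -> V}) i y : val i = 0%N ->
  set_first x y = upd x i y.
Proof. by move=> i0; apply/ffunP=> j; rewrite !ffunE -val_eqE i0. Qed.

End TupleUpdate.

Section Multilinear.
Variables (K : fieldType) (n : nat) (V W : lmodType K).
Implicit Types (f : {ffun 'I_n -> V} -> W) (x : {ffun 'I_n -> V}).

Lemma multilinear_upd f x i : multilinear f -> is_linear (fun z => f (upd x i z)).
Proof. by move=> fL a y z; apply: fL. Qed.

Lemma multilinear0 f x i : multilinear f -> x i = 0 -> f x = 0.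
Proof.
by move=> fL xi; rewrite -(upd_id x i) xi (is_linear0 (multilinear_upd x i fL)).
Qed.

End Multilinear.

Section UceSpace.
Variables (K : fieldType) (n : nat) (L U : lmodType K)
  (br : {ffun 'I_n -> L} -> L) (alpha : L -> L) (g : {ffun 'I_n -> L} -> U).
Hypothesis gU : is_uce_space br alpha g.

Lemma uce_linear_ext (W : lmodType K) (h1 h2 : U -> W) :
  is_linear h1 -> is_linear h2 -> (forall x, h1 (g x) = h2 (g x)) ->
  forall z, h1 z = h2 z.
Proof.
case: gU => gL gK gUniv h1L h2L E.
have fL : multilinear (h1 \o g) by move=> x i a y z /=; rewrite gL h1L.
have fK : kills_delta2 br alpha (h1 \o g) by move=> x y /=; rewrite gK is_linear_sum.
have [_ uniq] := gUniv W _ fL fK.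
by apply: uniq => // x /=; rewrite E.
Qed.

(* Induction on the number of leading entries not yet known to be pure
   tensors; each step is one application of uce_linear_ext. *)
Lemma uce_multilinear_ext (W : lmodType K) (F1 F2 : {ffun 'I_n -> U} -> W) :
  multilinear F1 -> multilinear F2 ->
  (forall X, F1 (fmap g X) = F2 (fmap g X)) -> forall Z, F1 Z = F2 Z.
Proof.
move=> F1L F2L E.
suff ext k : (k <= n)%N -> forall (Z : {ffun 'I_n -> U}) (Y : {ffun 'I_n -> {ffun 'I_n -> L}}),
    (forall j : 'I_n, (k <= j)%N -> Z j = g (Y j)) -> F1 Z = F2 Z.
  by move=> Z; apply: (ext n (leqnn n) Z [ffun=> [ffun=> 0]]) => j; rewrite leqNgt ltn_ord.
elim: k => [_ Z Y ZY|k IHk kn Z Y ZY].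
  have -> : Z = fmap g Y by apply/ffunP=> j; rewrite ffunE ZY.
  exact: E.
pose i := Ordinal kn.
rewrite -(upd_id Z i).
apply: (uce_linear_ext (multilinear_upd Z i F1L) (multilinear_upd Z i F2L)) => w.
apply: (IHk (ltnW kn) _ (upd Y i w)) => j kj.
rewrite !ffunE; case: eqP => // /eqP ji.
apply: ZY; rewrite ltn_neqAle kj andbT.
by apply: contra ji => /eqP kj'; apply/eqP/val_inj; rewrite /= kj'.
Qed.

End UceSpace.

Section UniversalCentralExtension.
Variables (K : fieldType) (n : nat) (L U : lmodType K)
    (br : {ffun 'I_n -> L} -> L) (alpha : L -> L)
    (g : {ffun 'I_n -> L} -> U) (brU : {ffun 'I_n -> U} -> U)
    (alphaU : U -> U) (u : U -> L).
Hypotheses (n2 : (2 <= n)%N) (HL : is_HomLeibniz br alpha) (Lperf : perfect br)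
  (alpha_inj : injective alpha) (Huce : is_uce br alpha g brU alphaU u)
  (UcondC : condC brU alphaU).

Let brL : multilinear br. Proof. by case: HL. Qed.
Let alphaL : is_linear alpha. Proof. by case: HL. Qed.
Let alpha_br x : alpha (br x) = br (fmap alpha x). Proof. by case: HL. Qed.
Let gU : is_uce_space br alpha g. Proof. by case: Huce. Qed.
Let gL : multilinear g. Proof. by case: gU. Qed.
Let gK : kills_delta2 br alpha g. Proof. by case: gU. Qed.
Let brUL : multilinear brU. Proof. by case: Huce => _ []. Qed.
Let brU_g X : brU (fmap g X) = g (fmap br X). Proof. by case: Huce => _ []. Qed.
Let alphaUL : is_linear alphaU. Proof. by case: Huce => _ _ []. Qed.
Let alphaU_g x : alphaU (g x) = g (fmap alpha x). Proof. by case: Huce => _ _ []. Qed.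
Let uL : is_linear u. Proof. by case: Huce => _ _ _ []. Qed.
Let u_g x : u (g x) = br x. Proof. by case: Huce => _ _ _ []. Qed.

Lemma brU_fmap_u Z : brU Z = g (fmap u Z).
Proof.
apply: (uce_multilinear_ext gU (F2 := g \o fmap u) brUL) => [x i a y z|X] /=.
  by rewrite !fmap_upd uL; apply: gL.
by rewrite brU_g; congr g; apply/ffunP=> j; rewrite !ffunE u_g.
Qed.

Lemma u_brU X : u (brU X) = br (fmap u X).
Proof. by rewrite brU_fmap_u u_g. Qed.

Lemma u_alphaU x : u (alphaU x) = alpha (u x).
Proof.
apply: (uce_linear_ext gU (is_linear_comp alphaUL uL) (is_linear_comp uL alphaL)) => y /=.
by rewrite alphaU_g !u_g alpha_br.
Qed.

Lemma u_surj l : exists m, l = u m.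
Proof.
have [s ->] := Lperf l; exists (\sum_(p <- s) p.1 *: g p.2).
by rewrite (is_linear_sum _ _ uL); apply: eq_bigr => p _; rewrite (is_linearZ uL) u_g.
Qed.

Lemma fmap_u_surj (y : {ffun 'I_n -> L}) : exists Y, y = fmap u Y.
Proof.
have /fin_all_exists [M yM] : forall j, exists m, y j = u m by move=> j; apply: u_surj.
by exists [ffun j => M j]; apply/ffunP=> j; rewrite !ffunE yM.
Qed.

Definition annihilator (v : L) := forall (z : {ffun 'I_n -> L}) k, br (upd z k v) = 0.

Lemma center_alpha_annihilator v :
  center (in_image alpha) br (alpha v) -> annihilator v.
Proof.
case=> _ vZ z k; apply: alpha_inj.
rewrite alpha_br fmap_upd (is_linear0 alphaL); apply: vZ => j.
by rewrite ffunE; exists (z j).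
Qed.

Let i0 : 'I_n := Ordinal (ltnW n2).
Let i1 : 'I_n := Ordinal n2.
Let i10 : i1 != i0. Proof. by []. Qed.

Lemma g_annihilator_nonfirst (l : {ffun 'I_n -> L}) i : val i != 0%N ->
  annihilator (l i) -> g (fmap alpha l) = 0.
Proof.
move=> i_gt0 li_ann.
have gl0L := multilinear_upd (fmap alpha l) i0 gL.
have [s Es] := Lperf (l i0).
rewrite -(upd_id l i0) Es fmap_upd (is_linear_sum _ _ alphaL) (is_linear_sum _ _ gl0L).
apply: big1 => p _; rewrite (is_linearZ alphaL) (is_linearZ gl0L) alpha_br.
rewrite -(@set_first_upd _ _ _ i0) // gK big1 ?scaler0 // => k _.
apply: (multilinear0 (i := k) gL); rewrite upd_eq.
have -> : set_first l (fmap alpha p.2 k) = upd (set_first l (fmap alpha p.2 k)) i (l i).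
  by apply/ffunP=> j; rewrite !ffunE; case: (eqVneq j i) => [->|//]; rewrite (negbTE i_gt0).
exact: li_ann.
Qed.

Lemma g_antisym01 (l : {ffun 'I_n -> L}) a b :
  g (fmap alpha (upd (upd l i1 b) i0 a)) = - g (fmap alpha (upd (upd l i1 a) i0 b)).
Proof.
pose Q p q := g (upd (upd (fmap alpha l) i1 q) i0 p).
have QD1 p p' q : Q (p + p') q = Q p q + Q p' q.
  exact: (is_linearD (multilinear_upd _ i0 gL)).
have QD2 p q q' : Q p (q + q') = Q p q + Q p q'.
  by rewrite /Q !(updC _ _ _ i10) (is_linearD (multilinear_upd _ i1 gL)).
have Qkk k : Q (alpha k) (alpha k) = 0.
  have [m ->] := u_surj k; have [M lM] := fmap_u_surj l.
  rewrite /Q -(UcondC m M) brU_fmap_u; congr g; apply/ffunP=> j.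
  rewrite !ffunE lM; case: j => [[|[|j]] jn] //=; rewrite ?ffunE u_alphaU //.
have := Qkk (a + b); rewrite (is_linearD alphaL) QD1 !QD2 !Qkk add0r addr0.
by rewrite /Q -!fmap_upd => /eqP; rewrite addr_eq0 => /eqP.
Qed.

Lemma g_annihilator (l : {ffun 'I_n -> L}) i :
  annihilator (l i) -> g (fmap alpha l) = 0.
Proof.
case: (eqVneq (val i) 0%N) => [i_eq0|i_gt0]; last exact: g_annihilator_nonfirst.
have -> : i = i0 by apply: val_inj.
move=> l0_ann; have -> : l = upd (upd l i1 (l i1)) i0 (l i0) by rewrite !upd_id.
rewrite g_antisym01 (g_annihilator_nonfirst (i := i1)) ?oppr0 //.
by rewrite upd_neq // upd_eq.
Qed.

Lemma u_image_alpha x : in_image alphaU x -> in_image alpha (u x).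
Proof. by case=> w ->; exists (u w); rewrite u_alphaU. Qed.

Lemma center_u x : center (in_image alphaU) brU x -> center (in_image alpha) br (u x).
Proof.
case=> xU xZ; split; first exact: u_image_alpha.
move=> i y yL.
have /fin_all_exists [M yM] : forall j, exists m, y j = u (alphaU m).
  by move=> j; have [w ->] := yL j; have [m ->] := u_surj w; exists m; rewrite u_alphaU.
have -> : y = fmap u [ffun j => alphaU (M j)] by apply/ffunP=> j; rewrite !ffunE yM.
rewrite -fmap_upd -u_brU xZ ?(is_linear0 uL) // => j.
by rewrite ffunE; exists (M j).
Qed.

Lemma center_of_u x : in_image alphaU x ->
  center (in_image alpha) br (u x) -> center (in_image alphaU) brU x.
Proof.
case=> w -> uxZ; split; first by exists w.
move=> i Y YU.
have /fin_all_exists [M YM] : forall j, exists m, Y j = alphaU m by [].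
have -> : Y = fmap alphaU [ffun j => M j] by apply/ffunP=> j; rewrite !ffunE YM.
rewrite brU_fmap_u -fmap_upd.
have -> : fmap u (fmap alphaU (upd [ffun j => M j] i w))
          = fmap alpha (upd [ffun j => u (M j)] i (u w)).
  by apply/ffunP=> j; rewrite !ffunE u_alphaU; case: ifP; rewrite ?ffunE.
apply: (g_annihilator (i := i)); rewrite upd_eq.
by apply: center_alpha_annihilator; rewrite -u_alphaU.
Qed.

Lemma u_onto_mod_center z : in_image alpha z ->
  exists2 x, in_image alphaU x & center (in_image alpha) br (z - u x).
Proof.
case=> w ->; have [m ->] := u_surj w.
exists (alphaU m); first by exists m.
rewrite u_alphaU subrr; split; first by exists 0; rewrite (is_linear0 alphaL).
by move=> i y _; apply: (multilinear0 (i := i) brL); rewrite upd_eq.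
Qed.

End UniversalCentralExtension.

(* Condition (C) is only needed on uce(L). *)
Theorem theorem5p7 (K : fieldType) (n : nat) (L U : lmodType K)
    (br : {ffun 'I_n -> L} -> L) (alpha : L -> L)
    (g : {ffun 'I_n -> L} -> U) (brU : {ffun 'I_n -> U} -> U)
    (alphaU : U -> U) (u : U -> L) :
  (2 <= n)%N ->
  is_HomLeibniz br alpha ->
  perfect br ->
  injective alpha ->
  is_uce br alpha g brU alphaU u ->
  condC br alpha ->
  condC brU alphaU ->
  (* the map x + Z(alphaU(U)) |-> u x + Z(alpha(L)) is a well-defined
     isomorphism alphaU(U)/Z(alphaU(U)) -> alpha(L)/Z(alpha(L)) *)
  [/\ (forall x, in_image alphaU x -> in_image alpha (u x)),
      (forall x, in_image alphaU x ->
         (center (in_image alpha) br (u x) <->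
          center (in_image alphaU) brU x)),
      (forall z, in_image alpha z ->
         exists2 x, in_image alphaU x &
           center (in_image alpha) br (z - u x)),
      is_linear u /\ (forall X, u (brU X) = br (fmap u X))
    & (forall x, u (alphaU x) = alpha (u x))].
Proof.
move=> n2 HL Lperf alpha_inj Huce _ UcondC.
have [_ _ _ [uL _]] := Huce.
split.
- exact: u_image_alpha HL Huce.
- move=> x xU; split; first exact: center_of_u n2 HL Lperf alpha_inj Huce UcondC x xU.
  exact: center_u HL Lperf Huce x.
- exact: u_onto_mod_center HL Lperf Huce.
- by split; [exact: uL | exact: u_brU Huce].
- exact: u_alphaU HL Huce.
Qed.
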